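(* Let $B=(\tilde U\dot\cup U,E)$ and $B'=(\tilde U\dot\cup U,E')$ be bipartite graphs with $|U|\ge|\tilde U|$ and $\mathrm{nd}_{\tilde U}(B,B')\le s$. If there are positive integers $x,n_1,n_2,n_3$ such that (i) $\deg_{B'}(\tilde u)\ge n_1$ for all $\tilde u\in\tilde U$, (ii) $|N_{B'}(\tilde S)|\ge x|\tilde S|$ for all $\tilde S\subseteq\tilde U$ with $|\tilde S|\le n_2$, (iii) $e_{B'}(\tilde S,S)\le\frac{n_1}{n_3}|\tilde S||S|$ for all $\tilde S\subseteq\tilde U$, $S\subseteq U$ with $xn_2\le|S|<|\tilde S|<n_3$, (iv) $|N_B(S)\cap\tilde S|>s$ for all $\tilde S\subseteq\tilde U$, $S\subseteq U$ with $|\tilde S|\ge n_3$ and $|S|>|U|-|\tilde S|$, then $B'$ has a matching covering $\tilde U$.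
   Context: For bipartite graphs $B,B'$ on the same vertex set $\tilde U\dot\cup U$, $\mathrm{nd}_{\tilde U}(B,B')$ is the number of vertices $\tilde u\in\tilde U$ with $N_B(\tilde u)\ne N_{B'}(\tilde u)$. $N_B(S)$ denotes the set of vertices with a neighbour in $S$, and $e_{B'}(\tilde S,S)$ the number of edges of $B'$ between $\tilde S$ and $S$. *)

From mathcomp Require Import all_boot.
Set Implicit Arguments. Unset Strict Implicit. Unset Printing Implicit Defensive.

Definition bigraph (tU U : finType) := tU -> U -> bool.

Section BiGraph.
Variables (tU U : finType).
Implicit Types (B : bigraph tU U) (tS : {set tU}) (S : {set U}).

Definition nbh B (tu : tU) : {set U} := [set u | B tu u].
Definition degt B (tu : tU) : nat := #|nbh B tu|.
Definition nbhT B tS : {set U} := [set u | [exists tu in tS, B tu u]].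
Definition nbhU B S : {set tU} := [set tu | [exists u in S, B tu u]].
Definition ecount B tS S : nat := #|[set p : tU * U | (p.1 \in tS) && (p.2 \in S) && B p.1 p.2]|.
Definition nd B B' : nat := #|[set tu : tU | nbh B tu != nbh B' tu]|.
Definition has_matching_covering B : Prop :=
  exists f : tU -> U, injective f /\ forall tu, B tu (f tu).
End BiGraph.

(* Hall's theorem is proved by the Halmos-Vaughan induction: either some
   proper nonempty T has at most |T| neighbours, and T and the rest (avoiding
   N(T)) are matched separately, or every such T has a surplus neighbour, and
   an arbitrary edge can be put into the matching first.

   For the Hall condition in B', suppose |N_{B'}(T)| < |T|.  If |T| <= n2,
   (ii) gives |N(T)| >= x|T| >= |T|.  If n2 < |T| < n3, then |N(T)| >= x n2 by
   (ii) applied to an n2-subset of T, so (iii) applies to S = N(T), and with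
   (i) it yields n1|T| n3 <= e(T, N(T)) n3 <= n1|T||N(T)|, i.e. |N(T)| >= n3.
   If |T| >= n3, apply (iv) to S = U \ N_{B'}(T): a vertex of T with a
   B-neighbour in S has none in B', so B and B' differ at more than s
   vertices. *)
From mathcomp Require Import all_boot zify.

Set Implicit Arguments.
Unset Strict Implicit.
Unset Printing Implicit Defensive.

Lemma exists_subset_card (T : finType) (A : {set T}) k :
  k <= #|A| -> exists2 A' : {set T}, A' \subset A & #|A'| = k.
Proof.
case/card_geqP=> s [uniq_s size_s sub_sA].
exists [set t in s]; first by apply/subsetP=> t; rewrite inE => /sub_sA.
by rewrite cardsE -size_s; apply/card_uniqP.
Qed.

Section Neighbourhoods.
Variables (tU U : finType).
Implicit Types (B : bigraph tU U) (T : {set tU}) (Y : {set U}).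

Lemma nbhTP B T u :
  reflect (exists2 t, t \in T & B t u) (u \in nbhT B T).
Proof.
rewrite inE; apply: (iffP existsP) => [[t /andP[]]|[t tT Btu]]; first by exists t.
by exists t; rewrite tT.
Qed.

Lemma nbh_sub_nbhT B T t : t \in T -> nbh B t \subset nbhT B T.
Proof. by move=> tT; apply/subsetP=> u; rewrite inE => Btu; apply/nbhTP; exists t. Qed.

Lemma nbhTS B T1 T2 : T1 \subset T2 -> nbhT B T1 \subset nbhT B T2.
Proof.
by move=> /subsetP sT12; apply/subsetP=> u /nbhTP[t /sT12 tT2 Btu]; apply/nbhTP; exists t.
Qed.

Lemma nbhTU B T1 T2 : nbhT B (T1 :|: T2) = nbhT B T1 :|: nbhT B T2.
Proof.
apply/setP=> u; rewrite in_setU; apply/nbhTP/orP.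
  by case=> t; rewrite inE => /orP[] tT Btu; [left|right]; apply/nbhTP; exists t.
by case=> /nbhTP[t tT Btu]; exists t; rewrite // inE tT ?orbT.
Qed.

Lemma nbhT1 B t : nbhT B [set t] = nbh B t.
Proof.
apply/setP=> u; rewrite [RHS]inE.
by apply/nbhTP/idP=> [[t' /set1P-> //]|Btu]; exists t; rewrite ?set11.
Qed.

Lemma ecount_nbhT B T : ecount B T (nbhT B T) = \sum_(t in T) degt B t.
Proof.
rewrite /ecount -sum1dep_card big_mkcond /=.
rewrite -(pair_bigA _ (fun t u => if (t \in T) && (u \in nbhT B T) && B t u then 1 else 0)) /=.
rewrite [RHS]big_mkcond; apply: eq_bigr=> t _; case: ifP => tT /=; last by rewrite big1.
rewrite /degt -sum1_card [RHS]big_mkcond; apply: eq_bigr=> u _.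
have Nu : B t u -> u \in nbhT B T by move=> Btu; apply/nbhTP; exists t.
by rewrite [u \in nbh B t]inE andbC; case: (boolP (B t u)) => //= /Nu ->.
Qed.

Definition restrU B Y : bigraph tU U := fun t u => B t u && (u \in Y).

Lemma nbhT_restrU B Y T : nbhT (restrU B Y) T = nbhT B T :&: Y.
Proof.
apply/setP=> u; rewrite in_setI; apply/nbhTP/andP.
  by case=> t tT /andP[Btu uY]; split=> //; apply/nbhTP; exists t.
by case=> /nbhTP[t tT Btu] uY; exists t; rewrite // /restrU Btu.
Qed.

Lemma card_nbhU_setC_nbhT B B' T :
  #|nbhU B (~: nbhT B' T) :&: T| <= nd B B'.
Proof.
apply: subset_leq_card; apply/subsetP=> t; rewrite !inE.
case/andP=> /existsP[u /andP[uN' Btu]] tT; apply/eqP=> nbh_eq.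
have : u \in nbh B t by rewrite inE.
rewrite nbh_eq inE => B'tu.
by move: uN'; rewrite in_setC => /nbhTP[]; exists t.
Qed.

End Neighbourhoods.

Section Hall.
Variables (tU U : finType).
Implicit Types (B : bigraph tU U) (X T : {set tU}) (Y : {set U}).

Definition matching_on B X (f : tU -> U) :=
  {in X &, injective f} /\ {in X, forall t, B t (f t)}.

Definition hall_cond B X := forall T, T \subset X -> #|T| <= #|nbhT B T|.

Lemma hall_condS B X1 X2 : X1 \subset X2 -> hall_cond B X2 -> hall_cond B X1.
Proof. by move=> sX12 hX2 T sTX1; apply: hX2; apply: subset_trans sX12. Qed.

Lemma matching_split B X X1 Y f1 f2 :
    X1 \subset X -> matching_on B X1 f1 -> {in X1, forall t, f1 t \in Y} ->
    matching_on (restrU B (~: Y)) (X :\: X1) f2 ->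
  matching_on B X (fun t => if t \in X1 then f1 t else f2 t).
Proof.
move=> sX1X [inj_f1 B_f1] f1Y [inj_f2 B_f2].
have inXD t : t \in X -> t \notin X1 -> t \in X :\: X1.
  by move=> tX tX1; rewrite inE tX1.
have f2Y t : t \in X -> t \notin X1 -> f2 t \notin Y.
  by move=> tX tX1; have /andP[_] := B_f2 t (inXD t tX tX1); rewrite inE.
split=> [t t' tX t'X /=|t tX /=]; last first.
  by case: ifP => [/B_f1 //|/negbT tX1]; case/andP: (B_f2 t (inXD t tX tX1)).
case: ifP => tX1; case: ifP => t'X1.
- exact: inj_f1.
- by move=> e; move: (f2Y t' t'X (negbT t'X1)); rewrite -e f1Y.
- by move=> e; move: (f2Y t tX (negbT tX1)); rewrite e f1Y.
- by apply: inj_f2; rewrite inE ?tX1 ?t'X1.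
Qed.

Variable u0 : U.

Section InductionStep.
Variables (B : bigraph tU U) (X : {set tU}).
Hypothesis hall_IH :
  forall B' X', #|X'| < #|X| -> hall_cond B' X' -> exists f, matching_on B' X' f.
Hypothesis hallX : hall_cond B X.

Lemma matching_critical T :
  T \subset X -> 0 < #|T| < #|X| -> #|nbhT B T| <= #|T| ->
  exists f, matching_on B X f.
Proof.
move=> sTX /andP[T_gt0 T_ltX] NT_leT.
have [f1 mf1] := hall_IH T_ltX (hall_condS sTX hallX).
have [f2 mf2] : exists f, matching_on (restrU B (~: nbhT B T)) (X :\: T) f.
  apply: hall_IH; first by rewrite cardsDS //; lia.
  move=> T'; rewrite nbhT_restrU -setDE subsetD => /andP[sT'X disTT'].
  have := @hallX (T :|: T'); rewrite subUset sTX sT'X nbhTU => /(_ isT).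
  (* |T| + |T'| <= |N(T) :|: N(T')| = |N(T)| + |N(T') :\: N(T)|, and |N(T)| <= |T| *)
  have TT'0 : T :&: T' = set0 by apply: disjoint_setI0; rewrite disjoint_sym.
  have := cardsUI T T'; rewrite TT'0 cards0.
  have := cardsUI (nbhT B T) (nbhT B T'); rewrite setIC.
  by have := cardsID (nbhT B T) (nbhT B T'); lia.
exists (fun t => if t \in T then f1 t else f2 t).
apply: (matching_split sTX mf1 _ mf2) => t tT.
by apply: subsetP (nbh_sub_nbhT B tT) _ _; rewrite inE; case: (mf1) => _ ->.
Qed.

Lemma matching_surplus t :
  t \in X -> (forall T, T \subset X -> 0 < #|T| < #|X| -> #|T| < #|nbhT B T|) ->
  exists f, matching_on B X f.
Proof.
move=> tX surplus.
have [u Btu] : exists u, B t u.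
  have := @hallX [set t]; rewrite sub1set tX cards1 nbhT1 card_gt0 => /(_ isT).
  by case/set0Pn=> u; rewrite inE; exists u.
have [f2 mf2] : exists f, matching_on (restrU B (~: [set u])) (X :\ t) f.
  apply: hall_IH; first by rewrite (cardsD1 t X) tX.
  move=> T sT; rewrite nbhT_restrU -setDE.
  have [->|T_neq0] := eqVneq T set0; first by rewrite cards0.
  have sTX : T \subset X by apply: subset_trans sT (subsetDl _ _).
  have T_ltX : #|T| < #|X|.
    by apply: leq_ltn_trans (subset_leq_card sT) _; rewrite (cardsD1 t X) tX.
  have := surplus T sTX; rewrite card_gt0 T_neq0 T_ltX => /(_ isT).
  by have := cardsD1 u (nbhT B T); case: (u \in nbhT B T) => /=; lia.
exists (fun t' => if t' \in [set t] then u else f2 t').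
apply: (@matching_split B X [set t] [set u] (fun=> u) f2 _ _ _ mf2).
- by rewrite sub1set.
- by split=> [t1 t2 /set1P-> /set1P-> //|t' /set1P->].
- by move=> t' _; rewrite set11.
Qed.

End InductionStep.

Lemma hall_on B X : hall_cond B X -> exists f, matching_on B X f.
Proof.
elim: {X}_.+1 {-2}X (ltnSn #|X|) B => // n IH X X_le B hallX.
have [->|[t tX]] := set_0Vmem X; first by exists (fun=> u0); split=> t; rewrite inE.
have IH' B' X' : #|X'| < #|X| -> hall_cond B' X' -> exists f, matching_on B' X' f.
  by move=> X'_lt; apply: IH; lia.
case: (boolP [exists T : {set tU}, [&& T \subset X, 0 < #|T| < #|X| & #|nbhT B T| <= #|T|]]).
  by case/existsP=> T /and3P[]; apply: matching_critical.
move/existsPn=> surplus; apply: (matching_surplus IH' hallX tX) => T sTX T_size.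
by have := surplus T; rewrite sTX T_size ltnNge.
Qed.

End Hall.

Theorem hall_marriage (tU U : finType) (B : bigraph tU U) :
  (forall T : {set tU}, #|T| <= #|nbhT B T|) -> has_matching_covering B.
Proof.
move=> hall; have [t0 _|tU0] := pickP (@predT tU); last first.
  have f : tU -> U by move=> t; have := tU0 t.
  by exists f; split=> t; have := tU0 t.
have [u0 _] : exists u, B t0 u.
  by have := hall [set t0]; rewrite cards1 nbhT1 card_gt0 => /set0Pn[u]; rewrite inE; exists u.
have [f [inj_f B_f]] := hall_on u0 (X := setT) (fun T _ => hall T).
by exists f; split=> [t t'|t]; [apply: inj_f|apply: B_f]; rewrite inE.
Qed.

Section ExpansionHallCondition.
Variables (tU U : finType) (B B' : bigraph tU U) (s x n1 n2 n3 : nat).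
Hypotheses (tU_le_U : #|tU| <= #|U|) (nd_le_s : nd B B' <= s).
Hypotheses (x_gt0 : 0 < x) (n1_gt0 : 0 < n1).
Hypothesis degt_ge : forall tu : tU, n1 <= degt B' tu.
Hypothesis expanding :
  forall tS : {set tU}, #|tS| <= n2 -> x * #|tS| <= #|nbhT B' tS|.
Hypothesis sparse :
  forall (tS : {set tU}) (S : {set U}), x * n2 <= #|S| -> #|S| < #|tS| -> #|tS| < n3 ->
    ecount B' tS S * n3 <= n1 * #|tS| * #|S|.
Hypothesis dense :
  forall (tS : {set tU}) (S : {set U}), n3 <= #|tS| -> #|U| - #|tS| < #|S| ->
    s < #|nbhU B S :&: tS|.
Implicit Type T : {set tU}.

Lemma hall_small T : #|T| <= n2 -> #|T| <= #|nbhT B' T|.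
Proof.
by move=> /expanding; apply: leq_trans; rewrite leq_pmull.
Qed.

Lemma hall_medium T : n2 < #|T| < n3 -> #|T| <= #|nbhT B' T|.
Proof.
case/andP=> n2_lt T_lt; rewrite leqNgt; apply/negP=> N_lt.
have [T' sT'T cardT'] := exists_subset_card (ltnW n2_lt).
have N_ge : x * n2 <= #|nbhT B' T|.
  rewrite -cardT'; apply: leq_trans (expanding _) (subset_leq_card (nbhTS _ sT'T)).
  by rewrite cardT'.
have e_ge : n1 * #|T| <= ecount B' T (nbhT B' T).
  by rewrite ecount_nbhT mulnC -sum_nat_const; apply: leq_sum=> t _; apply: degt_ge.
have : n1 * #|T| * n3 <= n1 * #|T| * #|nbhT B' T|.
  by apply: leq_trans (sparse N_ge N_lt T_lt); rewrite leq_mul2r e_ge orbT.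
rewrite leq_pmul2l ?muln_gt0 ?n1_gt0 //=; last by apply: leq_ltn_trans n2_lt.
by lia.
Qed.

Lemma hall_large T : n3 <= #|T| -> #|T| <= #|nbhT B' T|.
Proof.
move=> n3_le; rewrite leqNgt; apply/negP=> N_lt.
have T_le_U : #|T| <= #|U| := leq_trans (max_card T) tU_le_U.
have : #|U| - #|T| < #|~: nbhT B' T| by have := cardsC (nbhT B' T); lia.
move=> /(dense n3_le); rewrite ltnNge => /negP; apply.
exact: leq_trans (card_nbhU_setC_nbhT B B' T) nd_le_s.
Qed.

Lemma expansion_hall_cond T : #|T| <= #|nbhT B' T|.
Proof.
have [T_le|n2_lt] := leqP #|T| n2; first exact: hall_small.
have [T_lt|n3_le] := ltnP #|T| n3; last exact: hall_large.
by apply: hall_medium; rewrite n2_lt T_lt.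
Qed.

End ExpansionHallCondition.

Theorem lemma11p8 (tU U : finType) (B B' : bigraph tU U) (s x n1 n2 n3 : nat) :
  #|tU| <= #|U| ->
  nd B B' <= s ->
  0 < x -> 0 < n1 -> 0 < n2 -> 0 < n3 ->
  (forall tu : tU, n1 <= degt B' tu) ->
  (forall tS : {set tU}, #|tS| <= n2 -> x * #|tS| <= #|nbhT B' tS|) ->
  (forall (tS : {set tU}) (S : {set U}), x * n2 <= #|S| -> #|S| < #|tS| -> #|tS| < n3 ->
     ecount B' tS S * n3 <= n1 * #|tS| * #|S|) ->
  (forall (tS : {set tU}) (S : {set U}), n3 <= #|tS| -> #|U| - #|tS| < #|S| ->
     s < #|nbhU B S :&: tS|) ->
  has_matching_covering B'.
Proof.
move=> tU_le_U nd_le_s x_gt0 n1_gt0 _ _ degt_ge expanding sparse dense.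
apply: hall_marriage => T.
exact: expansion_hall_cond tU_le_U nd_le_s x_gt0 n1_gt0 degt_ge expanding sparse dense T.
Qed.
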